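(* In the setting of the context, write $\det(zI_q-\hat{E}(\kappa))=\sum_{\ell=-\bar r}^{\bar p}d_\ell(z)\kappa^\ell$ with $d_{-\bar r}\not\equiv 0$ and $d_{\bar p}\not\equiv 0$. Then $$\bar r\leq\sum_{i:\,c_i>0}c_i\qquad\text{and}\qquad \bar p\leq-\sum_{i:\,c_i<0}c_i.$$
   Context: Fix an integer $q\geq 2$, integer velocities $c_1,\dots,c_q\in\mathbb{Z}$, an invertible matrix $M\in\mathbb{R}^{q\times q}$, relaxation parameters $s_1\in\mathbb{R}$, $s_2,\dots,s_q\in(0,2]$, and $\epsilon\in\mathbb{R}^q$ with $\epsilon_1=1$. Set $K:=I_q+\mathrm{diag}(s_1,\dots,s_q)(\epsilon e_1^{\mathsf T}-I_q)$ and, for $\kappa\in\mathbb{C}\setminus\{0\}$, $\hat{E}(\kappa):=M\,\mathrm{diag}(\kappa^{-c_1},\dots,\kappa^{-c_q})M^{-1}K$. The coefficients $d_\ell(z)$ are polynomials in $z$; $\det(zI_q-\hat{E}(\kappa))$ is a Laurent polynomial in $\kappa$. *)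

(* Scalars: R an arbitrary real closed field (the reals are one);
   complex numbers C := R[i] (mathcomp-real-closed). *)
From HB Require Import structures.
From mathcomp Require Import all_boot all_order all_algebra.
From mathcomp Require Import complex.
Set Implicit Arguments. Unset Strict Implicit. Unset Printing Implicit Defensive.
Import Order.TTheory GRing.Theory Num.Theory.
Local Open Scope ring_scope.

(* Indices are 'I_q = {0,...,q-1}; the paper's index 1 is our index 0. *)

(* K := I_q + diag(s_1..s_q) (eps e_1^T - I_q) *)
Definition Kmat (R : rcfType) (q : nat) (s eps : 'I_q -> R) : 'M[R]_q :=
  1%:M + diag_mx (\row_i s i) *m
         ((\col_i eps i) *m (\row_j (((j : nat) == 0%N)%:R : R)) - 1%:M).

Definition Ehat (R : rcfType) (q : nat) (c : 'I_q -> int) (M : 'M[R]_q)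
  (s eps : 'I_q -> R) (kappa : R[i]) : 'M[R[i]]_q :=
  map_mx (real_complex R) M *m diag_mx (\row_i (kappa ^ (- c i)))
    *m map_mx (real_complex R) (invmx M) *m map_mx (real_complex R) (Kmat s eps).

From HB Require Import structures.
From mathcomp Require Import all_boot all_order all_algebra complex.
From mathcomp Require Import perm zify.
Set Implicit Arguments. Unset Strict Implicit. Unset Printing Implicit Defensive.
Import Order.TTheory GRing.Theory Num.Theory.
Local Open Scope ring_scope.

(* Since z I - Ehat(kappa) = M (z M^-1 - diag(kappa^-c) M^-1 K), multiplying row i of the
   second factor by kappa^(max c_i 0) clears all negative powers of kappa: with
   a = sum_(c_i > 0) c_i and b = - sum_(c_i < 0) c_i, kappa^a det(z I - Ehat(kappa)) is a
   polynomial in kappa of degree at most a + b.  It equals kappa^(a - rbar) times the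
   polynomial sum_k d_(k - rbar)(z) kappa^k.  Choosing z with d_(-rbar)(z) <> 0, the
   constant coefficient rules out rbar > a; choosing z with d_pbar(z) <> 0, the top
   coefficient sits in degree a + pbar, so pbar <= b. *)

Lemma eq_poly_nz (F : numDomainType) (p g : {poly F}) :
  (forall x, x != 0 -> p.[x] = g.[x]) -> p = g.
Proof.
move=> eq_pg; apply/eqP; rewrite -subr_eq0; apply/eqP.
apply: (@roots_geq_poly_eq0 _ _ [seq i.+1%:R | i <- iota 0 (size (p - g))]).
- apply/allP => _ /mapP[i _ ->]; apply/rootP.
  by rewrite hornerD hornerN eq_pg ?subrr ?pnatr_eq0.
- by rewrite map_inj_uniq ?iota_uniq // => i j /eqP; rewrite eqr_nat => /eqP [].
- by rewrite size_map size_iota.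
Qed.

Lemma laurent_shift (F : numFieldType) (p g : {poly F}) (a r : int) :
  a <= r -> (forall k, k != 0 -> k ^ a * p.[k] = k ^ r * g.[k]) ->
  p = 'X^(absz (r - a)%R) * g.
Proof.
move=> le_ar eq_pg; apply: eq_poly_nz => k k_neq0.
apply: (mulfI (expfz_neq0 a k_neq0)).
rewrite eq_pg // hornerM hornerXn mulrA exprnP -expfzDr //.
by rewrite gez0_abs ?subr_ge0 // [a + _]addrC subrK.
Qed.

Lemma laurent_order_le (F : numFieldType) (p g : {poly F}) (a r : int) :
  p`_0 != 0 -> (forall k, k != 0 -> k ^ a * p.[k] = k ^ r * g.[k]) -> r <= a.
Proof.
move=> p0_neq0 eq_pg; rewrite leNgt; apply/negP => lt_ar.
move: p0_neq0; rewrite (laurent_shift (ltW lt_ar) eq_pg) coefXnM.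
by rewrite absz_gt0 subr_eq0 (gt_eqF lt_ar) eqxx.
Qed.

Lemma laurent_size_gt (F : numFieldType) (p g : {poly F}) (a r : int) (n : nat) :
  r <= a -> (forall k, k != 0 -> k ^ a * p.[k] = k ^ r * g.[k]) ->
  p`_n != 0 -> (absz (a - r)%R + n < size g)%N.
Proof.
move=> le_ra eq_pg pn_neq0; rewrite ltnNge; apply: contra pn_neq0 => size_le.
have eq_gp k : k != 0 -> k ^ r * g.[k] = k ^ a * p.[k] by move=> /eq_pg ->.
have -> : p`_n = ('X^(absz (a - r)%R) * p)`_(absz (a - r)%R + n).
  by rewrite coefXnM ltnNge leq_addr addKn.
by rewrite -(laurent_shift le_ra eq_gp) nth_default.
Qed.

Lemma sum_absz (I : Type) (r : seq I) (f : I -> int) :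
  (\sum_(i <- r) absz (f i))%:Z
  = \sum_(i <- r | 0 < f i) f i - \sum_(i <- r | f i < 0) f i.
Proof.
elim: r => [|i r IH]; first by rewrite !big_nil subr0.
rewrite !big_cons PoszD IH.
case: (ltrgt0P (f i)) => fi.
- by rewrite gtz0_abs // addrA.
- by rewrite ltz0_abs // opprD addrCA.
- by rewrite fi add0r.
Qed.

Lemma size_det_leq (F : comNzRingType) (q : nat) (P : 'M[{poly F}]_q)
    (n : 'I_q -> nat) :
  (forall i j, size (P i j) <= (n i).+1)%N ->
  (size (\det P) <= (\sum_i n i).+1)%N.
Proof.
move=> size_P; apply: (big_ind (fun p : {poly F} => size p <= (\sum_i n i).+1)%N).
- by rewrite size_poly0.
- by move=> p g ? ?; rewrite (leq_trans (size_polyD _ _)) // geq_max; apply/andP.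
move=> s _.
have sum_size : (\sum_i size (P i (s i)) <= \sum_i n i + q)%N.
  rewrite -[in X in (_ + X)%N](card_ord q) -sum1_card -big_split leq_sum // => i _.
  by rewrite /= addn1.
have size_prod : (size (\prod_i P i (s i))%R <= (\sum_i n i).+1)%N.
  rewrite (leq_trans (size_poly_prod_leq _ _)) // card_ord.
  by rewrite leq_subLR addnS ltnS addnC.
by rewrite mulr_sign; case: ifP => _; rewrite ?size_polyN.
Qed.

Definition clear_denom (F : nzRingType) (x : int) (a b : F) : {poly F} :=
  if 0 < x then a *: 'X^(absz x) - b%:P else a%:P - b *: 'X^(absz x).

Lemma size_clear_denom (F : nzRingType) (x : int) (a b : F) :
  (size (clear_denom x a b) <= (absz x).+1)%N.
Proof.
have size_monomial (e : F) : (size (e *: 'X^(absz x)) <= (absz x).+1)%N.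
  by rewrite (leq_trans (size_scale_leq _ _)) // size_polyXn.
have size_const (e : F) : (size e%:P <= (absz x).+1)%N.
  by rewrite (leq_trans (size_polyC_leq1 _)).
by rewrite /clear_denom; case: ifP => _;
  rewrite (leq_trans (size_polyD _ _)) // geq_max size_polyN size_monomial size_const.
Qed.

Lemma horner_clear_denom (F : fieldType) (x : int) (a b k : F) : k != 0 ->
  (clear_denom x a b).[k] = k ^ (if 0 < x then x else 0) * (a - k ^ (- x) * b).
Proof.
move=> k_neq0; rewrite /clear_denom; case: x => [[|n]|n] /=.
- by rewrite oppr0 !expr0z !mul1r expr0 alg_polyC -polyCB hornerC.
- rewrite hornerD hornerN hornerZ hornerXn hornerC mulrBr mulrA.
  by rewrite -expfzDr // subrr expr0z mul1r mulrC.
- by rewrite expr0z mul1r hornerD hornerN hornerZ hornerXn hornerC NegzE opprK mulrC.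
Qed.

Section EhatNumerator.

Variables (R : rcfType) (q : nat) (c : 'I_q -> int) (M : 'M[R]_q) (s eps : 'I_q -> R).

Local Notation toC := (map_mx (real_complex R)).
Let Minv := toC (invmx M).
Let B := Minv *m toC (Kmat s eps).

(* Row i of z M^-1 - diag(kappa^-c) M^-1 K times kappa^(max c_i 0), as a polynomial in
   kappa. *)
Definition Ehat_numer_mx (z : R[i]) : 'M[{poly R[i]}]_q :=
  \matrix_(i, j) clear_denom (c i) (z * Minv i j) (B i j).

Definition Ehat_numer (z : R[i]) : {poly R[i]} :=
  \det (toC M) *: \det (Ehat_numer_mx z).

Lemma size_Ehat_numer (z : R[i]) :
  (size (Ehat_numer z) <= (\sum_i absz (c i)).+1)%N.
Proof.
rewrite (leq_trans (size_scale_leq _ _)) // size_det_leq // => i j.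
by rewrite mxE size_clear_denom.
Qed.

Lemma horner_Ehat_numer (z k : R[i]) : M \in unitmx -> k != 0 ->
  (Ehat_numer z).[k] =
  k ^ (\sum_(i < q | 0 < c i) c i) * \det (z%:M - Ehat c M s eps k).
Proof.
move=> M_unit k_neq0.
pose A := z *: Minv - diag_mx (\row_i (k ^ (- c i))) *m B.
have M_Minv : toC M *m Minv = 1%:M by rewrite -map_mxM mulmxV // map_mx1.
have det_Ehat : z%:M - Ehat c M s eps k = toC M *m A.
  by rewrite /Ehat /A mulmxBr -!mulmxA -scalemxAr M_Minv scalemx1 !mulmxA.
pose e := \row_i (k ^ (if 0 < c i then c i else 0)).
have eval_numer : map_mx (horner_eval k) (Ehat_numer_mx z) = diag_mx e *m A.
  apply/matrixP => i j.
  by rewrite /A !mul_diag_mx !mxE horner_evalE horner_clear_denom.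
rewrite hornerZ -horner_evalE -det_map_mx /= eval_numer det_Ehat.
rewrite !det_mulmx det_diag mulrCA; congr (_ * _).
rewrite (big_morph _ (fun m n => expfzDr m n k_neq0) (expr0z k)) [RHS]big_mkcond.
by apply: eq_bigr => i _; rewrite mxE; case: ifP.
Qed.

End EhatNumerator.

Theorem mainTheorem3 (R : rcfType) (q : nat) (hq : (2 <= q)%N)
  (c : 'I_q -> int) (M : 'M[R]_q) (hM : M \in unitmx)
  (s eps : 'I_q -> R)
  (hs : forall i : 'I_q, (0 < (i : nat))%N -> 0 < s i <= 2)
  (heps : forall i : 'I_q, (i : nat) = 0%N -> eps i = 1)
  (rbar pbar : int) (d : int -> {poly R[i]})
  (hrp : - rbar <= pbar)
  (hdr : d (- rbar) != 0) (hdp : d pbar != 0)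
  (hdet : forall z kappa : R[i], kappa != 0 ->
     \det (z%:M - Ehat c M s eps kappa) =
     \sum_(k < (absz (rbar + pbar)).+1) (d (k%:Z - rbar)).[z] * kappa ^ (k%:Z - rbar)) :
  rbar <= \sum_(i < q | 0 < c i) c i /\ pbar <= - \sum_(i < q | c i < 0) c i.
Proof.
set a : int := \sum_(i < q | 0 < c i) c i; set N := absz (rbar + pbar).
have N_eq : N%:Z = rbar + pbar by rewrite /N; lia.
pose p z := \poly_(k < N.+1) (d (k%:Z - rbar)).[z].
have p_laurent z k : k != 0 ->
    k ^ a * (p z).[k] = k ^ rbar * (Ehat_numer c M s eps z).[k].
  move=> k_neq0; rewrite horner_Ehat_numer // mulrCA; congr (_ * _).
  rewrite hdet // horner_poly mulr_sumr; apply: eq_bigr => j _.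
  by rewrite mulrCA -expfzDr // exprnP addrCA subrr addr0.
have [z0 dr_z0] := closed_nonrootP _ hdr.
have r_le_a : rbar <= a.
  by apply: (laurent_order_le _ (p_laurent z0)); rewrite coef_poly sub0r.
have [z1 dp_z1] := closed_nonrootP _ hdp.
have dp_coef : (p z1)`_N != 0.
  by rewrite coef_poly ltnSn N_eq addrC addKr.
have size_bound := leq_trans (laurent_size_gt r_le_a (p_laurent z1) dp_coef)
  (size_Ehat_numer c M s eps z1).
have sum_abs : (\sum_i absz (c i))%:Z = a - \sum_(i < q | c i < 0) c i := sum_absz _ c.
by split=> //; lia.
Qed.
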